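(* Let $A\in\mathbb{C}^{n\times m}$, $\alpha_1\ge 1/\sqrt{n}$, $\alpha_2\ge 1/\sqrt{m}$, and let $$U=\Big\{u\in\mathbb{C}^n:\|u\|\le\alpha_1,\ \operatorname{Re}(u)\ge0,\ \textstyle\sum_{i=1}^n u_i=1\Big\},\qquad V=\Big\{v\in\mathbb{C}^m:\|v\|\le\alpha_2,\ \operatorname{Re}(v)\ge0,\ \textstyle\sum_{i=1}^m v_i=1\Big\}.$$ Then there exists $(u^\star,v^\star,\varrho)\in U\times V\times\mathbb{R}$ such that $$\operatorname{Re}(u^{\star H}Av)\ge\varrho\ \ \forall v\in V\qquad\text{and}\qquad \operatorname{Re}(u^HAv^\star)\le\varrho\ \ \forall u\in U.$$ The real number $\varrho$ is uniquely determined and $$\varrho=\max_{u\in U}\min_{v\in V}\operatorname{Re}(u^HAv)=\min_{v\in V}\max_{u\in U}\operatorname{Re}(u^HAv).$$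
   Context: $\|\cdot\|$ is the Euclidean norm on $\mathbb{C}^k$, $u^H$ denotes the conjugate transpose, $\operatorname{Re}(u)\ge0$ is meant componentwise, and $\sum_i u_i=1$ is an equality of complex numbers (so the real parts sum to $1$ and the imaginary parts sum to $0$). *)

From HB Require Import structures.
From mathcomp Require Import all_boot all_order all_algebra.
From mathcomp Require Import all_classical all_reals.
From mathcomp Require Import complex.
Set Implicit Arguments. Unset Strict Implicit. Unset Printing Implicit Defensive.
Import Order.TTheory GRing.Theory Num.Theory.
Local Open Scope ring_scope.

Definition cvnorm (R : realType) (k : nat) (u : 'cV[R[i]]_k) : R :=
  Num.sqrt (\sum_(i < k) ((complex.Re (u i ord0)) ^+ 2 + (complex.Im (u i ord0)) ^+ 2)).

Definition ctr (R : realType) (k : nat) (u : 'cV[R[i]]_k) : 'rV[R[i]]_k :=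
  map_mx (@conjc R) u^T.

Definition feas (R : realType) (k : nat) (a : R) : set 'cV[R[i]]_k :=
  [set u | cvnorm u <= a /\ (forall i, 0 <= complex.Re (u i ord0))
           /\ \sum_(i < k) u i ord0 = 1].

Definition payoff (R : realType) (n m : nat) (A : 'M[R[i]]_(n, m))
  (u : 'cV[R[i]]_n) (v : 'cV[R[i]]_m) : R :=
  complex.Re ((ctr u *m A *m v) ord0 ord0).

Definition is_min_on (T : Type) (R : realType) (S : set T) (g : T -> R) (r : R) :=
  (exists2 x, S x & g x = r) /\ (forall x, S x -> r <= g x).

Definition is_max_on (T : Type) (R : realType) (S : set T) (g : T -> R) (r : R) :=
  (exists2 x, S x & g x = r) /\ (forall x, S x -> g x <= r).

Definition is_maxmin (X Y : Type) (R : realType) (S : set X) (S' : set Y)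
  (f : X -> Y -> R) (r : R) :=
  (forall x, S x -> exists mn, is_min_on S' (f x) mn) /\
  (exists2 x, S x & is_min_on S' (f x) r) /\
  (forall x mn, S x -> is_min_on S' (f x) mn -> mn <= r).

Definition is_minmax (X Y : Type) (R : realType) (S : set X) (S' : set Y)
  (f : X -> Y -> R) (r : R) :=
  (forall y, S' y -> exists mx, is_max_on S (fun x => f x y) mx) /\
  (exists2 y, S' y & is_max_on S (fun x => f x y) r) /\
  (forall y mx, S' y -> is_max_on S (fun x => f x y) mx -> r <= mx).

Definition saddle (R : realType) (n m : nat) (A : 'M[R[i]]_(n, m))
  (a1 a2 : R) (u : 'cV[R[i]]_n) (v : 'cV[R[i]]_m) (r : R) :=
  feas a1 u /\ feas a2 v /\
  (forall v', feas a2 v' -> r <= payoff A u v') /\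
  (forall u', feas a1 u' -> payoff A u' v <= r).

From HB Require Import structures.
From mathcomp Require Import all_boot all_order all_algebra.
From mathcomp Require Import all_classical all_reals all_analysis.
From mathcomp Require Import complex.
From mathcomp Require Import ring lra.
Import Order.TTheory GRing.Theory Num.Theory.
Import numFieldNormedType.Exports.
Set Implicit Arguments. Unset Strict Implicit. Unset Printing Implicit Defensive.
Local Open Scope ring_scope.
Local Open Scope classical_set_scope.

(* Writing u = a + ib and v = e + if in real coordinates (a, b) and (e, f),
   the payoff Re (u^H A v) becomes a real bilinear form x M y^T and U, V become
   compact convex subsets of R^(2n) and R^(2m), so the theorem is von Neumann's
   minimax theorem for this game.  Let the maximiser best-respond while the
   minimiser runs projected gradient descent with step eta: if D bounds the
   squared diameter of V and G the squared gradients, the regret after T steps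
   is at most (D + T eta^2 G) / (2 eta), so for suitable eta and T the averaged
   strategies form an eps-saddle point.  A cluster point of eps-saddle points,
   eps -> 0, is a saddle point, and the value's uniqueness and
   max-min = min-max follow from the saddle inequalities alone. *)

Lemma compact_argmax (R : realType) (T : topologicalType) (A : set T) (f : T -> R) :
  A !=set0 -> compact A -> continuous f ->
  exists2 c, A c & forall t, A t -> f t <= f c.
Proof.
move=> A0 cA cf; have [c] := compact_EVT_max A0 cA (continuous_subspaceT cf).
by rewrite inE => Ac cmax; exists c => // t At; apply: cmax; rewrite inE.
Qed.

Lemma compact_argmin (R : realType) (T : topologicalType) (A : set T) (f : T -> R) :
  A !=set0 -> compact A -> continuous f ->
  exists2 c, A c & forall t, A t -> f c <= f t.
Proof.
move=> A0 cA cf; have [c] := compact_EVT_min A0 cA (continuous_subspaceT cf).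
by rewrite inE => Ac cmin; exists c => // t At; apply: cmin; rewrite inE.
Qed.

Lemma le0_of_le_mul_small (R : realFieldType) (d s : R) :
  0 <= s -> (forall t, 0 < t <= 1 -> d <= t * s) -> d <= 0.
Proof.
move=> s0 small; rewrite leNgt; apply/negP => d0.
have ds0 : 0 < d + s by lra.
have t01 : 0 < d / (d + s) <= 1 by rewrite divr_gt0 //= ler_pdivrMr // mul1r; lra.
have := small _ t01; have : 0 < d / (d + s) * d by rewrite mulr_gt0 ?divr_gt0.
have -> : d / (d + s) * s = d - d / (d + s) * d by field; rewrite lt0r_neq0.
lra.
Qed.


Section SaddleValue.
Variables (R : realType) (T1 T2 : Type) (X : set T1) (Y : set T2).
Variables (f : T1 -> T2 -> R) (xs : T1) (ys : T2).
Hypotheses (Xxs : X xs) (Yys : Y ys).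
Hypothesis saddle_xy : forall x y, X x -> Y y -> f x ys <= f xs y.

Lemma saddle_is_maxmin :
  (forall x, X x -> exists mn, is_min_on Y (f x) mn) -> is_maxmin X Y f (f xs ys).
Proof.
move=> min_f; split=> //; split.
  by exists xs => //; split=> [|y Yy]; [exists ys | exact: saddle_xy].
by move=> x mn Xx [_ le_mn]; exact: le_trans (le_mn _ Yys) (saddle_xy Xx Yys).
Qed.

Lemma saddle_is_minmax :
  (forall y, Y y -> exists mx, is_max_on X (f^~ y) mx) -> is_minmax X Y f (f xs ys).
Proof.
move=> max_f; split=> //; split.
  by exists ys => //; split=> [|x Xx]; [exists xs | exact: saddle_xy].
by move=> y mx Yy [_ ge_mx]; exact: le_trans (saddle_xy Xxs Yy) (ge_mx _ Xxs).
Qed.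

End SaddleValue.

Section RowGeometry.
Variable R : realType.

Definition dotp q (a b : 'rV[R]_q) : R := \sum_j a 0 j * b 0 j.

Definition sqdist q (a b : 'rV[R]_q) : R := dotp (a - b) (a - b).

Lemma dotpp_ge0 q (a : 'rV[R]_q) : 0 <= dotp a a.
Proof. by apply: sumr_ge0 => j _; rewrite -expr2 sqr_ge0. Qed.

Lemma sqdist_ge0 q (a b : 'rV[R]_q) : 0 <= sqdist a b.
Proof. exact: dotpp_ge0. Qed.

Lemma dotpBr q (a b c : 'rV[R]_q) : dotp a (b - c) = dotp a b - dotp a c.
Proof. by rewrite /dotp -sumrB; apply: eq_bigr => j _; rewrite !mxE mulrBr. Qed.

Lemma sqdist_convex_comb q (z w y : 'rV[R]_q) t :
  sqdist z (t *: y + (1 - t) *: w) =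
  sqdist z w - 2 * t * dotp (z - w) (y - w) + t ^+ 2 * sqdist y w.
Proof.
rewrite /sqdist /dotp !mulr_sumr -sumrB -big_split /=.
by apply: eq_bigr => j _; rewrite !mxE; ring.
Qed.

Lemma sqdist_polar q (z w y : 'rV[R]_q) :
  sqdist z y = sqdist z w + sqdist w y - 2 * dotp (z - w) (y - w).
Proof.
rewrite /sqdist /dotp !mulr_sumr -big_split -sumrB /=.
by apply: eq_bigr => j _; rewrite !mxE; ring.
Qed.

Lemma sqdist_step q (a g y : 'rV[R]_q) (eta : R) :
  sqdist (a - eta *: g) y = sqdist a y - 2 * eta * dotp g (a - y) + eta ^+ 2 * dotp g g.
Proof.
rewrite /sqdist /dotp !mulr_sumr -sumrB -big_split /=.
by apply: eq_bigr => j _; rewrite !mxE; ring.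
Qed.

Lemma dotpZl q a (x y : 'rV[R]_q) : dotp (a *: x) y = a * dotp x y.
Proof. by rewrite /dotp mulr_sumr; apply: eq_bigr => j _; rewrite mxE mulrA. Qed.

Lemma dotpZr q a (x y : 'rV[R]_q) : dotp x (a *: y) = a * dotp x y.
Proof. by rewrite /dotp mulr_sumr; apply: eq_bigr => j _; rewrite mxE mulrCA. Qed.

Lemma dotp_suml q T (x : 'I_T -> 'rV[R]_q) y :
  dotp (\sum_(t < T) x t) y = \sum_(t < T) dotp (x t) y.
Proof.
by rewrite /dotp exchange_big; apply: eq_bigr => j _; rewrite summxE mulr_suml.
Qed.

Lemma dotp_sumr q T x (y : 'I_T -> 'rV[R]_q) :
  dotp x (\sum_(t < T) y t) = \sum_(t < T) dotp x (y t).
Proof.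
by rewrite /dotp exchange_big; apply: eq_bigr => j _; rewrite summxE mulr_sumr.
Qed.

Lemma dotp_row_mx k l (x1 y1 : 'rV[R]_k) (x2 y2 : 'rV[R]_l) :
  dotp (row_mx x1 x2) (row_mx y1 y2) = dotp x1 y1 + dotp x2 y2.
Proof.
rewrite /dotp big_split_ord /=.
by congr (_ + _); apply: eq_bigr => j _; rewrite ?row_mxEl ?row_mxEr.
Qed.

Lemma continuous_dotp (T : topologicalType) q (F G : T -> 'rV[R]_q) :
  (forall j, continuous (fun t => F t 0 j)) ->
  (forall j, continuous (fun t => G t 0 j)) ->
  continuous (fun t => dotp (F t) (G t)).
Proof.
move=> cF cG; apply: continuous_big => [z|j _ t]; first exact: add_continuous.
by apply: (@continuousM _ _ (fun t => F t 0 j) (fun t => G t 0 j)); [apply: cF|apply: cG].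
Qed.

Lemma continuous_sqdist q (z : 'rV[R]_q) : continuous (sqdist z).
Proof.
have cBz j : continuous (fun w : 'rV[R]_q => (z - w) 0 j).
  have -> : (fun w : 'rV[R]_q => (z - w) 0 j) = (fun=> z 0 j) - (fun w => w 0 j).
    by apply/funext => w; rewrite !mxE.
  by move=> w; apply: continuousB; [exact: cst_continuous | exact: coord_continuous].
exact: continuous_dotp.
Qed.

Lemma dotp_convex_comb q (x y : 'rV[R]_q) t :
  dotp (t *: x + (1 - t) *: y) (t *: x + (1 - t) *: y) =
  t * dotp x x + (1 - t) * dotp y y - t * (1 - t) * sqdist x y.
Proof.
rewrite /sqdist /dotp !mulr_sumr -big_split -sumrB /=.
by apply: eq_bigr => j _; rewrite !mxE; ring.
Qed.

Lemma sqr_coord_le_dotp q (w : 'rV[R]_q) j : w 0 j ^+ 2 <= dotp w w.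
Proof.
rewrite /dotp (bigD1 j) //= -expr2 lerDl.
by apply: sumr_ge0 => l _; rewrite -expr2 sqr_ge0.
Qed.

Lemma compact_dotp_le q (c : R) : compact [set w : 'rV[R]_q | dotp w w <= c].
Proof.
apply: bounded_closed_compact; last first.
  have cw : continuous (fun w : 'rV[R]_q => dotp w w).
    by apply: continuous_dotp => j; exact: coord_continuous.
  exact: (continuous_closedP _).1 cw _ (@closed_le _ c).
exists (1 + c); split=> [|N cN w /= wc]; first exact: num_real.
have c0 : 0 <= c := le_trans (dotpp_ge0 w) wc.
rewrite /Num.norm /= mx_normrE.
apply: (big_ind (fun x => x <= N)) => [|x y xN yN|[i j] _ /=]; first lra.
  by rewrite ge_max xN yN.
have := sqr_coord_le_dotp w j; rewrite (ord1 i) -real_normK ?num_real // => wj.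
by have := normr_ge0 (w 0 j); nra.
Qed.

Lemma continuous_mulmx_coord (T : topologicalType) p q (M : 'M[R]_(p, q))
    (F : T -> 'rV[R]_p) :
  (forall i, continuous (fun t => F t 0 i)) ->
  forall j, continuous (fun t => (F t *m M) 0 j).
Proof.
move=> cF j; under eq_fun do rewrite mxE.
apply: continuous_big => [z|i _ t]; first exact: add_continuous.
apply: (@continuousM _ _ (fun t => F t 0 i) (fun=> M i j)); first exact: cF.
exact: cst_continuous.
Qed.

Lemma projected_descent_regret q (P : 'rV[R]_q -> 'rV[R]_q) (ys gs : nat -> 'rV[R]_q)
    (eta G : R) (y : 'rV[R]_q) T :
  (forall z, sqdist (P z) y <= sqdist z y) ->
  (forall t, ys t.+1 = P (ys t - eta *: gs t)) ->
  (forall t, dotp (gs t) (gs t) <= G) ->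
  2 * eta * \sum_(t < T) dotp (gs t) (ys t - y) + sqdist (ys T) y <=
  sqdist (ys 0%N) y + T%:R * (eta ^+ 2 * G).
Proof.
move=> P_contr ysS gsG; elim: T => [|T IH]; first by rewrite big_ord0 mulr0 add0r mul0r addr0.
have step := P_contr (ys T - eta *: gs T); rewrite -ysS sqdist_step in step.
have gsG' : eta ^+ 2 * dotp (gs T) (gs T) <= eta ^+ 2 * G.
  by rewrite ler_wpM2l ?sqr_ge0 ?gsG.
by rewrite big_ord_recr /= -natr1 mulrDl mul1r mulrDr; lra.
Qed.

End RowGeometry.

Lemma convex_setP (R : realType) q (Y : set 'rV[R]_q) :
  convex_set (Y : set (convex_lmodType _)) <->
  forall x y t, Y x -> Y y -> 0 <= t <= 1 -> Y (t *: x + (1 - t) *: y).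
Proof.
split=> [convY x y t Yx Yy /andP[t0 t1]|convY x y l].
  by have := convY x y (Itv01 t0 t1); rewrite !inE => /(_ Yx Yy).
rewrite !inE => Yx Yy; apply: convY => //.
by apply/andP; split; [apply: ge0 | apply: le1].
Qed.

Section ConvexSet.
Variables (R : realType) (q : nat) (Y : set 'rV[R]_q).
Hypothesis convY : convex_set (Y : set (convex_lmodType _)).

Let convex_comb_mem := (convex_setP Y).1 convY.

Lemma convex_mean (ys : nat -> 'rV[R]_q) T :
  (forall t, Y (ys t)) -> Y (T.+1%:R^-1 *: \sum_(t < T.+1) ys t).
Proof.
move=> Yys; elim: T => [|T IH]; first by rewrite big_ord1 invr1 scale1r.
have s01 : 0 <= (T.+2%:R^-1 : R) <= 1 by rewrite invr_ge0 ler0n invf_le1 ?ler1n.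
suff -> : T.+2%:R^-1 *: \sum_(t < T.+2) ys t =
    T.+2%:R^-1 *: ys T.+1 + (1 - T.+2%:R^-1) *: (T.+1%:R^-1 *: \sum_(t < T.+1) ys t).
  exact: convex_comb_mem.
rewrite big_ord_recr /= scalerDr addrC scalerA; congr (_ + _ *: _).
have T0 : 0 < T.+1%:R :> R by rewrite ltr0n.
by rewrite -(@natr1 R T.+1); field; rewrite !lt0r_neq0 //; lra.
Qed.

Lemma convex_nearest_point : Y !=set0 -> compact Y ->
  forall z, exists2 w, Y w & forall y, Y y -> sqdist w y <= sqdist z y.
Proof.
move=> Y0 cY z.
have [w Yw wmin] := compact_argmin Y0 cY (@continuous_sqdist R q z).
exists w => // y Yy.
(* [w] also minimises the distance to [z] on the segment [w, y], so the angle
   at [w] between [z] and [y] is obtuse. *)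
have obtuse : dotp (z - w) (y - w) <= 0.
  suff : 2 * dotp (z - w) (y - w) <= 0 by lra.
  apply: (le0_of_le_mul_small (sqdist_ge0 y w)) => t /andP[t0 t1].
  have t01 : 0 <= t <= 1 by rewrite (ltW t0) t1.
  have := wmin _ (convex_comb_mem Yy Yw t01).
  rewrite sqdist_convex_comb -subr_ge0 => h.
  by rewrite -(ler_pM2l t0) mulrA; nra.
by rewrite (sqdist_polar z w y); have := sqdist_ge0 z w; lra.
Qed.

End ConvexSet.

Lemma descent_parameters (R : realType) (D G eps : R) : 0 <= G -> 0 < eps ->
  exists eta N, 0 < eta /\ forall S : R,
    2 * eta * S <= D + N.+1%:R * (eta ^+ 2 * G) -> S <= N.+1%:R * eps.
Proof.
move=> G0 eps0; pose eta := eps / (G + 1).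
have eta0 : 0 < eta by rewrite divr_gt0 //; lra.
have etaG : eta * G <= eps by rewrite mulrAC ler_pdivrMr; nra.
have eta_eps0 : 0 < eta * eps by rewrite mulr_gt0.
have [N _ N_large] := nbhs_infty_gtr (D / (eta * eps)).
exists eta, N; split=> // S regret.
have DN : D < N.+1%:R * (eta * eps).
  by rewrite -ltr_pdivrMr //; exact: (N_large N.+1 (leqnSn N)).
have etaGN : N.+1%:R * (eta ^+ 2 * G) <= N.+1%:R * (eta * eps).
  by rewrite ler_wpM2l // expr2 -mulrA ler_wpM2l // ltW.
have eta2 : 0 < 2 * eta by rewrite mulr_gt0.
by rewrite -(ler_pM2l eta2); lra.
Qed.

Section MatrixGame.
Variables (R : realType) (p q : nat) (M : 'M[R]_(p, q)).
Variables (X : set 'rV[R]_p) (Y : set 'rV[R]_q).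
Hypotheses (X0 : X !=set0) (Y0 : Y !=set0) (cX : compact X) (cY : compact Y).
Hypotheses (convX : convex_set (X : set (convex_lmodType _)))
  (convY : convex_set (Y : set (convex_lmodType _))).

Lemma continuous_game_l y : continuous (fun x : 'rV[R]_p => dotp (x *m M) y).
Proof.
apply: continuous_dotp => j; last exact: cst_continuous.
by apply: continuous_mulmx_coord => i; apply: coord_continuous.
Qed.

Lemma continuous_game_r x : continuous (fun y : 'rV[R]_q => dotp (x *m M) y).
Proof. by apply: continuous_dotp => j; [exact: cst_continuous | exact: coord_continuous]. Qed.

Lemma mean_approx_saddle (xs : nat -> 'rV[R]_p) (ys : nat -> 'rV[R]_q) T eps :
  (forall t, X (xs t)) -> (forall t, Y (ys t)) ->
  (forall t x, X x -> dotp (x *m M) (ys t) <= dotp (xs t *m M) (ys t)) ->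
  (forall y, Y y -> \sum_(t < T.+1) (dotp (xs t *m M) (ys t) - dotp (xs t *m M) y)
                      <= T.+1%:R * eps) ->
  exists2 xb, X xb & exists2 yb, Y yb &
    forall x y, X x -> Y y -> dotp (x *m M) yb <= dotp (xb *m M) y + eps.
Proof.
move=> Xxs Yys best_xs regret.
exists (T.+1%:R^-1 *: \sum_(t < T.+1) xs t); first exact: (convex_mean convX T Xxs).
exists (T.+1%:R^-1 *: \sum_(t < T.+1) ys t); first exact: (convex_mean convY T Yys).
move=> x y Xx Yy.
rewrite -scalemxAl mulmx_suml dotpZl dotpZr dotp_suml dotp_sumr.
have T0 : 0 < T.+1%:R :> R by rewrite ltr0n.
have -> : eps = T.+1%:R^-1 * (T.+1%:R * eps) by rewrite mulrA mulVf ?mul1r ?lt0r_neq0.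
rewrite -mulrDr; apply: ler_wpM2l; first by rewrite invr_ge0 ltW.
have := regret _ Yy; rewrite sumrB.
have : \sum_(t < T.+1) dotp (x *m M) (ys t) <= \sum_(t < T.+1) dotp (xs t *m M) (ys t).
  by apply: ler_sum => t _; apply: best_xs.
lra.
Qed.

Lemma approx_saddle eps : 0 < eps ->
  exists2 xb, X xb & exists2 yb, Y yb &
    forall x y, X x -> Y y -> dotp (x *m M) yb <= dotp (xb *m M) y + eps.
Proof.
move=> eps0; have [y0 Yy0] := Y0.
have [yD _ maxD] := compact_argmax Y0 cY (@continuous_sqdist R q y0).
set D := sqdist y0 yD in maxD.
have cG : continuous (fun x : 'rV[R]_p => dotp (x *m M) (x *m M)).
  by apply: continuous_dotp; apply: continuous_mulmx_coord => i; apply: coord_continuous.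
have [xG _ maxG] := compact_argmax X0 cX cG.
set G := dotp (xG *m M) (xG *m M) in maxG.
have G0 : 0 <= G := dotpp_ge0 _.
have [br br_spec] : {br : 'rV[R]_q -> 'rV[R]_p &
    forall y, X (br y) /\ forall x, X x -> dotp (x *m M) y <= dotp (br y *m M) y}.
  apply: (@choice _ _ (fun y x =>
    X x /\ forall x', X x' -> dotp (x' *m M) y <= dotp (x *m M) y)).
  move=> y; have [x Xx xmax] := compact_argmax X0 cX (@continuous_game_l y).
  by exists x.
have [proj proj_spec] : {proj : 'rV[R]_q -> 'rV[R]_q &
    forall z, Y (proj z) /\ forall y, Y y -> sqdist (proj z) y <= sqdist z y}.
  apply: (@choice _ _ (fun z w => Y w /\ forall y, Y y -> sqdist w y <= sqdist z y)).
  move=> z; have [w Yw wmin] := convex_nearest_point convY Y0 cY z.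
  by exists w.
have [eta [N [eta0 tuned]]] := descent_parameters D G0 eps0.
pose ys t := iter t (fun z => proj (z - eta *: (br z *m M))) y0.
have Yys t : Y (ys t).
  by case: t => [|t] //=; case: (proj_spec (ys t - eta *: (br (ys t) *m M))).
apply: (@mean_approx_saddle (br \o ys) ys N) => [t|//|t x Xx|y Yy].
- by case: (br_spec (ys t)).
- by case: (br_spec (ys t)) => _; apply.
have := @projected_descent_regret R q proj ys (fun t => br (ys t) *m M) eta G y N.+1
  (fun z => (proj_spec z).2 y Yy) (fun t => erefl) (fun t => maxG _ (br_spec _).1).
under eq_bigr do rewrite dotpBr.
have := maxD _ Yy; have := sqdist_ge0 (ys N.+1) y.
move: (\sum_(_ < _) _) => S Dy ys_ge0 regret; apply: tuned; lra.
Qed.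

Lemma matrix_game_saddle : exists2 xs, X xs & exists2 ys, Y ys &
  forall x y, X x -> Y y -> dotp (x *m M) ys <= dotp (xs *m M) y.
Proof.
have [zs zs_spec] : {zs : nat -> 'rV[R]_p * 'rV[R]_q & forall k,
    [/\ X (zs k).1, Y (zs k).2 & forall x y, X x -> Y y ->
      dotp (x *m M) (zs k).2 <= dotp ((zs k).1 *m M) y + k.+1%:R^-1]}.
  apply: (@choice _ _ (fun k z => [/\ X z.1, Y z.2 & forall x y, X x -> Y y ->
      dotp (x *m M) z.2 <= dotp (z.1 *m M) y + k.+1%:R^-1])) => k.
  have k0 : 0 < k.+1%:R^-1 :> R by rewrite invr_gt0 ltr0n.
  have [xb Xxb [yb Yyb approx]] := approx_saddle k0.
  by exists (xb, yb).
have zsXY : (zs @ \oo) (X `*` Y).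
  by apply: (@filterE _ \oo _ (zs @^-1` (X `*` Y))) => k; case: (zs_spec k).
have [[xs ys] [[/= Xxs Yys] zs_cluster]] := compact_setX cX cY _ zsXY.
exists xs => //; exists ys => // x y Xx Yy.
apply/ler_addgt0Pr => e e0.
pose gap := (fun z : 'rV[R]_p * 'rV[R]_q => dotp (x *m M) z.2) - (fun z => dotp (z.1 *m M) y).
have gap_cont : continuous gap.
  move=> z; apply: continuousB.
    exact: (@continuous_comp _ _ _ snd _ _ cvg_snd (@continuous_game_r x _)).
  exact: (@continuous_comp _ _ _ fst _ _ cvg_fst (@continuous_game_l y _)).
have closedC : closed (gap @^-1` [set r | r <= e]).
  by apply: preimage_closed; [move=> z _; apply: gap_cont | exact: closed_le].
have zsC : (zs @ \oo) (gap @^-1` [set r | r <= e]).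
  have [K _ small_inv] := near_infty_natSinv_lt (PosNum e0).
  exists K => // k /= Kk; rewrite lerBlDr addrC.
  have [_ _ approx] := zs_spec k; apply: le_trans (approx _ _ Xx Yy) _.
  by rewrite lerD2l ltW //; apply: small_inv.
have : closure (gap @^-1` [set r | r <= e]) (xs, ys).
  by rewrite clusterE in zs_cluster; apply: zs_cluster.
by rewrite -(closure_id _).1 //= /gap !fctE /=; lra.
Qed.

End MatrixGame.

Section Realification.
Variable R : realType.

Definition re_im_row k (u : 'cV[R[i]]_k) : 'rV[R]_(k + k) :=
  row_mx (\row_i complex.Re (u i 0)) (\row_i complex.Im (u i 0)).

Definition of_re_im k (w : 'rV[R]_(k + k)) : 'cV[R[i]]_k :=
  \col_i Complex (w 0 (lshift k i)) (w 0 (rshift k i)).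

Lemma re_im_rowK k : cancel (@re_im_row k) (@of_re_im k).
Proof.
move=> u; apply/matrixP => i j; rewrite (ord1 j) mxE row_mxEl row_mxEr !mxE.
by case: (u i 0).
Qed.

Lemma of_re_imK k : cancel (@of_re_im k) (@re_im_row k).
Proof.
move=> w; apply/rowP => j; have [l ->|l ->] := split_ordP j.
  by rewrite row_mxEl !mxE.
by rewrite row_mxEr !mxE.
Qed.

Lemma Re_sum k (F : 'I_k -> R[i]) : complex.Re (\sum_i F i) = \sum_i complex.Re (F i).
Proof. by apply: (big_morph (@complex.Re R)) => [[a b] [c d]|]. Qed.

Lemma Im_sum k (F : 'I_k -> R[i]) : complex.Im (\sum_i F i) = \sum_i complex.Im (F i).
Proof. by apply: (big_morph (@complex.Im R)) => [[a b] [c d]|]. Qed.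

(* Re (conj (a + ib) (c + id) (e + if)) = a (c e - d f) + b (d e + c f). *)
Definition realify n m (A : 'M[R[i]]_(n, m)) : 'M[R]_(n + n, m + m) :=
  block_mx (map_mx (@complex.Re R) A) (- map_mx (@complex.Im R) A)
           (map_mx (@complex.Im R) A) (map_mx (@complex.Re R) A).

Lemma payoff_realify n m (A : 'M[R[i]]_(n, m)) u v :
  payoff A u v = dotp (re_im_row u *m realify A) (re_im_row v).
Proof.
rewrite mul_row_block dotp_row_mx /payoff /ctr /dotp -big_split mxE Re_sum.
apply: eq_bigr => j _; rewrite !mxE -!big_split !mulr_suml -big_split Re_sum.
apply: eq_bigr => i _; rewrite !mxE.
case: (u i 0) => a b; case: (A i j) => c d; case: (v j 0) => e f /=.
ring.
Qed.

End Realification.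

Definition feas_re_im (R : realType) k (a : R) : set 'rV[R]_(k + k) :=
  [set w | feas a (of_re_im w)].
Arguments feas_re_im {R} k a.

Section RealFeasible.
Variables (R : realType) (k : nat) (a : R).
Hypothesis a0 : 0 <= a.

Lemma feas_of_re_imP (w : 'rV[R]_(k + k)) :
  feas a (of_re_im w) <->
  [/\ dotp w w <= a ^+ 2, forall i, 0 <= w 0 (lshift k i),
      \sum_i w 0 (lshift k i) = 1 & \sum_i w 0 (rshift k i) = 0].
Proof.
rewrite /feas /=.
have -> : cvnorm (of_re_im w) = Num.sqrt (dotp w w).
  rewrite /cvnorm /dotp big_split_ord big_split /=.
  by congr (Num.sqrt (_ + _)); apply: eq_bigr => i _; rewrite !mxE /= expr2.
have -> : \sum_i of_re_im w i 0 = Complex (\sum_i w 0 (lshift k i)) (\sum_i w 0 (rshift k i)).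
  apply/eqP; rewrite eq_complex Re_sum Im_sum.
  by apply/andP; split; apply/eqP; apply: eq_bigr => i _; rewrite mxE.
have complex_eq1 (x y : R) : Complex x y = 1 <-> x = 1 /\ y = 0.
  by split=> [/eqP|[-> ->]] //; rewrite eq_complex /= => /andP[/eqP -> /eqP ->].
rewrite complex_eq1 -{1}(ger0_norm a0) -sqrtr_sqr ler_sqrt ?sqr_ge0 ?dotpp_ge0 //.
split=> [[wa [w_ge0 [-> ->]]]|[wa w_ge0 -> ->]].
- by split=> // i; have := w_ge0 i; rewrite mxE /=.
- by split=> //; split=> // i; rewrite mxE /=.
Qed.

Lemma closed_feas_re_im : closed (feas_re_im k a).
Proof.
have closed_pre (g : 'rV[R]_(k + k) -> R) (D : set R) :
    continuous g -> closed D -> closed (g @^-1` D).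
  by move=> cg; apply: (continuous_closedP g).1.
have csum (h : 'I_k -> 'I_(k + k)) :
    continuous (fun w : 'rV[R]_(k + k) => \sum_i w 0 (h i)).
  by apply: continuous_big => [z|i _]; [exact: add_continuous | exact: coord_continuous].
have -> : feas_re_im k a =
    [set w | dotp w w <= a ^+ 2] `&` \bigcap_i [set w | 0 <= w 0 (lshift k i)] `&`
    [set w | \sum_i w 0 (lshift k i) = 1] `&` [set w | \sum_i w 0 (rshift k i) = 0].
  apply/seteqP; split=> w /=.
    by move=> /feas_of_re_imP[wa w_ge0 sl sr]; do !split=> //; move=> i _; apply: w_ge0.
  by move=> [[[wa w_ge0] sl] sr]; apply/feas_of_re_imP; split=> // i; apply: w_ge0.
apply: closedI; [apply: closedI; [apply: closedI|]|].
- apply: closed_pre (@closed_le _ _).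
  by apply: continuous_dotp => j; exact: coord_continuous.
- by apply: closed_bigI => i _; apply: closed_pre (@closed_ge _ _); exact: coord_continuous.
- exact: closed_pre (csum _) (@closed_eq _ _).
- exact: closed_pre (csum _) (@closed_eq _ _).
Qed.

Lemma compact_feas_re_im : compact (feas_re_im k a).
Proof.
apply: (subclosed_compact closed_feas_re_im (compact_dotp_le (c := a ^+ 2))).
by move=> w /feas_of_re_imP[].
Qed.

Lemma convex_feas_re_im : convex_set (feas_re_im k a : set (convex_lmodType _)).
Proof.
apply/convex_setP => x y t.
move=> /feas_of_re_imP[xa x_ge0 xl xr] /feas_of_re_imP[ya y_ge0 yl yr] /andP[t0 t1].
have sum_comb (h : 'I_k -> 'I_(k + k)) : \sum_i (t *: x + (1 - t) *: y) 0 (h i) =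
    t * \sum_i x 0 (h i) + (1 - t) * \sum_i y 0 (h i).
  by rewrite !mulr_sumr -big_split; apply: eq_bigr => i _; rewrite !mxE.
apply/feas_of_re_imP; split=> [|i||]; rewrite ?sum_comb ?xl ?yl ?xr ?yr.
- rewrite dotp_convex_comb.
  have := sqdist_ge0 x y; have : 0 <= t * (1 - t) by rewrite mulr_ge0 ?subr_ge0.
  nra.
- by rewrite !mxE; have := x_ge0 i; have := y_ge0 i; nra.
- lra.
- lra.
Qed.

Lemma feas_re_im_nonempty : (0 < k)%N -> (Num.sqrt k%:R)^-1 <= a -> feas_re_im k a !=set0.
Proof.
move=> k0 ka; have k0R : 0 < k%:R :> R by rewrite ltr0n.
pose w : 'rV[R]_(k + k) := row_mx (const_mx k%:R^-1) 0.
have wl i : w 0 (lshift k i) = k%:R^-1 by rewrite row_mxEl mxE.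
have wr i : w 0 (rshift k i) = 0 by rewrite row_mxEr mxE.
have sum_wl : \sum_i w 0 (lshift k i) = 1.
  under eq_bigr do rewrite wl.
  by rewrite sumr_const card_ord -[_ *+ k]mulr_natr mulVf ?lt0r_neq0.
exists w; apply/feas_of_re_imP; split=> [|i||] //.
- rewrite /dotp big_split_ord /= [X in _ + X]big1 => [|j _]; last by rewrite wr mulr0.
  under eq_bigr do rewrite wl.
  rewrite addr0 sumr_const card_ord -[_ *+ k]mulr_natr -mulrA mulVf ?lt0r_neq0 // mulr1.
  have : (Num.sqrt k%:R)^-1 ^+ 2 <= a ^+ 2 by rewrite ler_sqr ?nnegrE ?invr_ge0 ?sqrtr_ge0.
  by rewrite exprVn sqr_sqrtr ?ler0n.
- by rewrite wl invr_ge0 ler0n.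
- by rewrite big1 // => i _; rewrite wr.
Qed.

End RealFeasible.

Lemma feas_re_im_row (R : realType) k (a : R) (u : 'cV[R[i]]_k) :
  feas_re_im k a (re_im_row u) = feas a u.
Proof. by rewrite /feas_re_im /= re_im_rowK. Qed.

Lemma saddle_value_unique (R : realType) n m (A : 'M[R[i]]_(n, m)) a1 a2 u v r u' v' r' :
  saddle A a1 a2 u v r -> saddle A a1 a2 u' v' r' -> r' = r.
Proof.
move=> [Uu [Vv [ge_r le_r]]] [Uu' [Vv' [ge_r' le_r']]].
have := ge_r _ Vv'; have := le_r _ Uu'; have := ge_r' _ Vv; have := le_r' _ Uu.
lra.
Qed.

Section ComplexGame.
Variables (R : realType) (n m : nat) (A : 'M[R[i]]_(n, m)) (a1 a2 : R).
Hypotheses (n0 : (0 < n)%N) (m0 : (0 < m)%N).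
Hypotheses (a1n : (Num.sqrt n%:R)^-1 <= a1) (a2m : (Num.sqrt m%:R)^-1 <= a2).

Let a1_ge0 : 0 <= a1. Proof. by apply: le_trans a1n; rewrite invr_ge0 sqrtr_ge0. Qed.
Let a2_ge0 : 0 <= a2. Proof. by apply: le_trans a2m; rewrite invr_ge0 sqrtr_ge0. Qed.

Lemma payoff_saddle_exists : exists us vs, [/\ feas a1 us, feas a2 vs &
  forall u v, feas a1 u -> feas a2 v -> payoff A u vs <= payoff A us v].
Proof.
have [xs Uxs [ys Vys saddle_xy]] := matrix_game_saddle (realify A)
  (feas_re_im_nonempty a1_ge0 n0 a1n) (feas_re_im_nonempty a2_ge0 m0 a2m)
  (compact_feas_re_im a1_ge0) (compact_feas_re_im a2_ge0)
  (convex_feas_re_im a1_ge0) (convex_feas_re_im a2_ge0).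
exists (of_re_im xs), (of_re_im ys); split=> // u v Uu Vv.
rewrite !payoff_realify !of_re_imK.
by apply: saddle_xy; rewrite feas_re_im_row.
Qed.

Lemma payoff_min_exists u : exists mn, is_min_on (feas a2) (payoff A u) mn.
Proof.
have [c Vc cmin] := compact_argmin (feas_re_im_nonempty a2_ge0 m0 a2m)
  (compact_feas_re_im a2_ge0) (continuous_game_r (M := realify A) (x := re_im_row u)).
exists (payoff A u (of_re_im c)); split; first by exists (of_re_im c).
move=> v Vv; rewrite !payoff_realify of_re_imK.
by apply: cmin; rewrite feas_re_im_row.
Qed.

Lemma payoff_max_exists v : exists mx, is_max_on (feas a1) (payoff A^~ v) mx.
Proof.
have [c Uc cmax] := compact_argmax (feas_re_im_nonempty a1_ge0 n0 a1n)
  (compact_feas_re_im a1_ge0) (continuous_game_l (M := realify A) (y := re_im_row v)).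
exists (payoff A (of_re_im c) v); split; first by exists (of_re_im c).
move=> u Uu; rewrite !payoff_realify of_re_imK.
by apply: cmax; rewrite feas_re_im_row.
Qed.

End ComplexGame.

Theorem theorem3 (R : realType) (n m : nat) (A : 'M[R[i]]_(n, m)) (a1 a2 : R) :
  (0 < n)%N -> (0 < m)%N ->
  (Num.sqrt (n%:R))^-1 <= a1 -> (Num.sqrt (m%:R))^-1 <= a2 ->
  exists (us : 'cV[R[i]]_n) (vs : 'cV[R[i]]_m) (r : R),
    saddle A a1 a2 us vs r /\
    (forall u' v' r', saddle A a1 a2 u' v' r' -> r' = r) /\
    is_maxmin (feas a1) (feas a2) (payoff A) r /\
    is_minmax (feas a1) (feas a2) (payoff A) r.
Proof.
move=> n0 m0 a1n a2m.
have [us [vs [Uus Vvs saddle_uv]]] := payoff_saddle_exists A n0 m0 a1n a2m.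
have saddle_us_vs : saddle A a1 a2 us vs (payoff A us vs).
  by split=> //; split=> //; split=> [v Vv|u Uu]; apply: saddle_uv.
exists us, vs, (payoff A us vs); split=> //; split.
  by move=> u v r; apply: saddle_value_unique saddle_us_vs.
split.
- by apply: (saddle_is_maxmin Uus Vvs saddle_uv) => u _; apply: payoff_min_exists.
- by apply: (saddle_is_minmax Uus Vvs saddle_uv) => v _; apply: payoff_max_exists.
Qed.
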